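(* There exist infinitely many finite groups $G$ whose prime graph $\Gamma_e(G)$ is a path with two edges (on three vertices) while the codegree graph $\Gamma(G)$ is a triangle.
   Context: For $\chi\in{\rm Irr}(G)$, ${\rm cod}(\chi)=|G:\ker\chi|/\chi(1)$. The codegree graph $\Gamma(G)$ has vertices the prime divisors of $|G|$, distinct $p,q$ adjacent iff $pq$ divides ${\rm cod}(\chi)$ for some $\chi\in{\rm Irr}(G)$. The prime graph $\Gamma_e(G)$ has the same vertices, distinct $p,q$ adjacent iff $G$ has an element of order divisible by $pq$. *)

From HB Require Import structures.
From mathcomp Require Import all_boot all_order all_algebra all_fingroup all_solvable all_field all_character.
Set Implicit Arguments. Unset Strict Implicit. Unset Printing Implicit Defensive.
Import GRing.Theory Num.Theory.

Definition cod (gT : finGroupType) (G : {group gT}) (i : Iirr G) : algC :=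
  ((#|G : cfker 'chi[G]_i|)%g%:R / 'chi[G]_i 1%g)%R.

Definition codeg_adj (gT : finGroupType) (G : {group gT}) (p q : nat) : Prop :=
  p != q /\ exists (i : Iirr G) (m : nat), cod i = (m%:R)%R /\ (p * q %| m)%N.

Definition prime_adj (gT : finGroupType) (G : {group gT}) (p q : nat) : Prop :=
  p != q /\ exists2 x, x \in G & (p * q %| #[x]%g)%N.

From mathcomp Require Import all_boot all_order all_algebra all_fingroup all_solvable all_field all_character.
From mathcomp Require Import zify.
Set Implicit Arguments. Unset Strict Implicit. Unset Printing Implicit Defensive.
Import GRing.Theory Num.Theory.

(* The witnesses are G = A5 x C with C a cyclic group of order 3^(k+1).
   Prime graph: A5 has elements of order 2, 3 and 5 and C one of order 3,
   which gives elements of order 6 and 15; but an element of S5 whose order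
   is divisible by 5 is a 5-cycle, hence has order exactly 5, and C is a
   3-group, so no element of G has order divisible by 10.
   Codegree graph: since sum chi(1)^2 = 60 and 16a + 25b <> 59, A5 has a
   faithful irreducible character theta of degree d in {2, 3, 6}.  For a
   nonprincipal linear lambda of C, the kernel of theta x lambda is ker lambda
   because Z(A5) = 1, so cod(theta x lambda) = 60 * 3^m / d with m >= 1,
   which is divisible by 6, 10 and 15. *)

Section PairOrder.
Variables gT1 gT2 : finGroupType.
Implicit Type x : (gT1 * gT2)%type.

Lemma expg_pair x k : (x ^+ k)%g = ((x.1 ^+ k)%g, (x.2 ^+ k)%g).
Proof. by case: x => a c; elim: k => [|k IHk] //; rewrite !expgS IHk. Qed.

Lemma order_fst_dvdn x : #[x.1]%g %| #[x]%g.
Proof. exact: (morph_order (fst_morphism gT1 gT2) (in_setT x)). Qed.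

Lemma order_snd_dvdn x : #[x.2]%g %| #[x]%g.
Proof. exact: (morph_order (snd_morphism gT1 gT2) (in_setT x)). Qed.

Lemma order_pair_dvdn x : #[x]%g %| #[x.1]%g * #[x.2]%g.
Proof.
rewrite order_dvdn expg_pair; apply/eqP.
by rewrite expgM expg_order expg1n mulnC expgM expg_order expg1n.
Qed.

Lemma mul_dvdn_order_pair x p q :
  coprime p q -> p %| #[x.1]%g -> q %| #[x.2]%g -> p * q %| #[x]%g.
Proof.
move=> co_pq p_x1 q_x2; rewrite Gauss_dvd //.
by rewrite (dvdn_trans p_x1 (order_fst_dvdn x)) (dvdn_trans q_x2 (order_snd_dvdn x)).
Qed.

Lemma dvdn_order_fst_coprime (C : {group gT2}) x m :
  x.2 \in C -> coprime m #|C| -> m %| #[x]%g -> m %| #[x.1]%g.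
Proof.
move=> Cx2 co_mC m_x; have co_m_x2 := coprime_dvdr (order_dvdG Cx2) co_mC.
by rewrite -(Gauss_dvdl _ co_m_x2) (dvdn_trans m_x (order_pair_dvdn x)).
Qed.

End PairOrder.

Lemma prime_adjC (gT : finGroupType) (G : {group gT}) p q :
  prime_adj G p q -> prime_adj G q p.
Proof. by case=> neq_pq [x Gx pq_x]; split; [rewrite eq_sym | exists x; rewrite // mulnC]. Qed.

Lemma prime_adj_setX (gT1 gT2 : finGroupType) (A : {group gT1}) (C : {group gT2}) p q :
  prime p -> prime q -> p != q -> p %| #|A| -> q %| #|C| ->
  prime_adj (setX_group A C) p q.
Proof.
move=> p_pr q_pr neq_pq p_A q_C; split=> //.
have [a Aa oa] := Cauchy p_pr p_A; have [c Cc oc] := Cauchy q_pr q_C.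
exists (a, c); first by rewrite in_setX Aa Cc.
by apply: mul_dvdn_order_pair; rewrite ?oa ?oc // prime_coprime // dvdn_prime2.
Qed.

Lemma perm_order_prime_card (T : finType) (a : {perm T}) :
  prime #|T| -> #|T| %| #[a]%g -> #[a]%g = #|T|.
Proof.
set p := #|T| => p_pr p_a.
pose b := (a ^+ (#[a] %/ p))%g.
have ob : #[b]%g = p by rewrite orderXdiv ?dvdn_div // divnA // mulKn ?order_gt0.
have [y0 by0] : exists y0, b y0 != y0.
  apply/existsP; apply: contraT; rewrite negb_exists => /forallP b_id.
  have b1 : b = 1%g by apply/permP => y; rewrite perm1; apply/eqP/negPn.
  by move: p_pr; rewrite -ob b1 order1.
have orb_full : porbit b y0 = [set: T].
  apply/eqP; rewrite eqEcard subsetT cardsT -/p.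
  have orb_p : #|porbit b y0| %| p by rewrite -ob orderE porbitE card_orbit dvdn_indexg.
  have orb_gt1 : 1 < #|porbit b y0|.
    apply/card_gt1P; exists y0, (b y0).
    by rewrite porbit_id eq_sym by0 -{1}(expg1 b) mem_porbit.
  have orb_nt : #|porbit b y0| != 1 by rewrite gtn_eqF.
  by rewrite (elimT (prime_nt_dvdP p_pr orb_nt) orb_p) leqnn.
have [k a_y0] : exists k, a y0 = (b ^+ k)%g y0 by apply/porbitP; rewrite orb_full inE.
(* a commutes with b, whose powers act regularly, so a is determined by a y0 *)
have a_bk : a = (b ^+ k)%g.
  apply/permP => z; have /porbitP[m ->] : z \in porbit b y0 by rewrite orb_full inE.
  have ab : commute (b ^+ m)%g a by apply/commute_sym/commuteX/commuteX.
  by rewrite -permM ab permM a_y0 -!permM -!expgD addnC.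
by apply/eqP; rewrite eqn_dvd p_a andbT -ob a_bk orderXdvd.
Qed.

Lemma divisor60_small d : d %| 60 -> 1 < d -> d ^ 2 <= 60 -> d \in [:: 2; 3; 4; 5; 6].
Proof.
move=> d60 d_gt1 d2; have d_lt8 : d < 8 by apply: contraTT d2; rewrite -!ltnNge; nia.
by move: d d_lt8 d60 d_gt1 {d2} => [|[|[|[|[|[|[|[|d]]]]]]]].
Qed.

Lemma codegree_A5_dvdn d e : d \in [:: 2; 3; 6] -> 3 %| e ->
  [/\ d %| 60 * e, 2 * 3 %| 60 * e %/ d, 3 * 5 %| 60 * e %/ d & 2 * 5 %| 60 * e %/ d].
Proof. by rewrite !inE => d236 /dvdnP[e' ->]; case/or3P: d236 => /eqP ->; split; lia. Qed.

Lemma index_cfker_pgroup (gT : finGroupType) (H : {group gT}) (p : nat) (j : Iirr H) :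
  (p.-group H)%g -> j != 0%R -> p %| #|H : cfker ('chi_j)%R|%g.
Proof.
move=> pH nz_j; have [m idx] := p_natP (pnat_dvd (dvdn_indexg H (cfker ('chi_j)%R)) pH).
case: m idx => [|m] idx; last by rewrite idx expnS dvdn_mulr.
by move/eqP: idx; rewrite indexg_eq1 subGcfker (negbTE nz_j).
Qed.

Section SimpleNonabelian.
Local Open Scope ring_scope.
Variables (gT : finGroupType) (K : {group gT}).
Hypotheses (simK : simple K) (nabK : ~~ abelian K).

Lemma simple_der1 : K^`(1)%g = K.
Proof.
have [_ /(_ _ (der_normal 1 K))[der1|//]] := simpleP K simK.
by case/negP: nabK; apply/derG1P.
Qed.

Lemma simple_center : 'Z(K)%g = 1%g.
Proof.
have [_ /(_ _ (center_normal K))[//|ZK]] := simpleP K simK.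
by case/negP: nabK; apply/center_idP.
Qed.

Lemma simple_cfker_irr (i : Iirr K) : i != 0 -> cfker 'chi_i = 1%g.
Proof.
move=> nz_i; have [_ /(_ _ (cfker_normal 'chi_i))[//|kerK]] := simpleP K simK.
by move: nz_i; rewrite -subGcfker kerK subxx.
Qed.

End SimpleNonabelian.

Section PerfectOrder60.
Local Open Scope ring_scope.

Lemma perfect_order60_irr_degree (gT : finGroupType) (K : {group gT}) :
  #|K| = 60%N -> K^`(1)%g = K ->
  exists2 i : Iirr K, i != 0 & exists2 d : nat, 'chi_i 1%g = d%:R & d \in [:: 2; 3; 6].
Proof.
move=> cardK perfK; pose d (i : Iirr K) := Num.truncn ('chi_i 1%g).
have dK i : (d i)%:R = 'chi_i 1%g by rewrite truncnK ?Cnat_irr1.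
have d_gt1 i : i != 0 -> (1 < d i)%N.
  move=> nz_i; rewrite ltnNge; apply: contra nz_i; rewrite leq_eqVlt ltnS leqn0.
  case/orP=> /eqP di; last by move: (irr1_neq0 i); rewrite -dK di eqxx.
  by rewrite -subGcfker -{1}perfK -lin_irr_der1 qualifE /= irr_char -dK di eqxx.
have d_dvd i : (d i %| 60)%N by have := dvd_irr1_cardG i; rewrite -dK cardK dvdC_nat.
have sum_d2 : (\sum_i d i ^ 2 = 60)%N.
  apply/eqP; rewrite -(eqr_nat algC) natr_sum -cardK -irr_sum_square.
  by apply/eqP/eq_bigr => i _; rewrite natrX dK.
have d2_le i : (d i ^ 2 <= 60)%N by rewrite -sum_d2 (bigD1 i) //= leq_addr.
have d0 : d 0 = 1%N by apply/eqP; rewrite -(eqr_nat algC) dK irr0 cfun11.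
have [i /andP[nz_i d_i] | no236] := pickP (fun i => (i != 0) && (d i \in [:: 2; 3; 6])).
  by exists i => //; exists (d i); rewrite ?dK.
have d2E i : i != 0 -> (d i ^ 2 = 16 * (d i == 4) + 25 * (d i == 5))%N.
  move=> nz_i; have := no236 i; rewrite nz_i /=.
  have := divisor60_small (d_dvd i) (d_gt1 i nz_i) (d2_le i).
  by rewrite !inE; case/or4P=> [/eqP->|/eqP->|/eqP->|/orP[]/eqP->].
move: sum_d2; rewrite (bigD1 0) //= d0 (eq_bigr _ d2E) big_split /= -!big_distrr /=; lia.
Qed.

End PerfectOrder60.

Section CodegreeDprod.
Local Open Scope ring_scope.
Variables (gT : finGroupType) (G K H : {group gT}).
Hypotheses (KxH : (K \x H)%g = G) (ZK1 : 'Z(K)%g = 1%g).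

Lemma dprod_normal_subr (N : {group gT}) : (N <| G)%g -> (K :&: N)%g = 1%g -> (N \subset H)%g.
Proof.
move=> nNG tiKN; have [/andP[sKG nKG] /andP[sHG nHG]] := dprod_normal2 KxH.
have cKN : (N \subset 'C(K))%g.
  apply/commG1P/trivgP; rewrite -tiKN setIC.
  apply: commg_subI; rewrite subsetI subxx /=.
    exact: subset_trans (normal_sub nNG) nKG.
  exact: subset_trans sKG (normal_norm nNG).
have CGK : 'C_G(K)%g = H.
  have [_ _ cHK _] := dprodP KxH.
  rewrite -(subcent_dprod KxH); last by rewrite subsetI normG (subset_trans sKG nHG).
  have -> : 'C_K(K)%g = 1%g by exact: ZK1.
  by rewrite (setIidPl cHK) dprod1g.
by rewrite -CGK subsetI (normal_sub nNG).
Qed.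

Lemma cfker_dprod_faithful i j :
  cfker 'chi[K]_i = 1%g -> cfker (cfDprod KxH 'chi_i 'chi[H]_j) = cfker 'chi_j.
Proof.
move=> ker_i; have [/andP[sKG _] /andP[sHG _]] := dprod_normal2 KxH.
have Nchi := irrWchar (cfDprod_irr KxH i j).
have tiK : (K :&: cfker (cfDprod KxH 'chi_i 'chi_j))%g = 1%g.
  by rewrite -cfker_Res // cfDprod_Resl cfker_scale_nz ?irr1_neq0.
have kerH : (H :&: cfker (cfDprod KxH 'chi_i 'chi_j))%g = cfker 'chi_j.
  by rewrite -cfker_Res // cfDprod_Resr cfker_scale_nz ?irr1_neq0.
by rewrite -kerH; apply/esym/setIidPr/dprod_normal_subr; rewrite ?cfker_normal.
Qed.

Lemma cod_dprod_Iirr i j :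
  cfker 'chi[K]_i = 1%g -> 'chi[H]_j \is a linear_char ->
  cod (dprod_Iirr KxH (i, j)) = (#|K| * #|H : cfker 'chi_j|%g)%N%:R / 'chi_i 1%g.
Proof.
move=> ker_i lin_j; have [_ /andP[sHG _]] := dprod_normal2 KxH.
rewrite /cod dprod_IirrE cfker_dprod_faithful // cfDprod1 (lin_char1 lin_j) mulr1.
by rewrite -(Lagrange_index sHG (cfker_sub _)) -(index_sdprod (dprodWsdC KxH)).
Qed.
End CodegreeDprod.

Lemma card_Alt5 : #|('Alt_('I_5))%g| = 60.
Proof. by apply/eqP; rewrite -(eqn_pmul2l (isT : 0 < 2)) card_Alt card_ord. Qed.

Section Alt5TimesThreeGroup.
Variables (gT : finGroupType) (C : {group gT}) (k : nat).
Hypotheses (abC : abelian C) (cardC : #|C| = 3 ^ k.+1).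
Let A := ('Alt_('I_5))%G.
Let G := setX_group A C.

Lemma card_Alt5_setX : #|G| = 60 * 3 ^ k.+1.
Proof. by rewrite /= cardsX card_Alt5 cardC. Qed.

Lemma primes_Alt5_setX : perm_eq (primes #|G|) [:: 2; 3; 5].
Proof.
apply: uniq_perm => // [|p]; first exact: primes_uniq.
rewrite card_Alt5_setX primesM ?expn_gt0 // primesX // (_ : primes 60 = [:: 2; 3; 5]) //.
by rewrite !inE; case: (p == 3); rewrite ?orbT ?orbF.
Qed.

Lemma prime_graph_Alt5_setX : [/\ prime_adj G 2 3, prime_adj G 3 5 & ~ prime_adj G 2 5].
Proof.
have C3 : 3 %| #|C| by rewrite cardC expnS dvdn_mulr.
split; first by apply: prime_adj_setX; rewrite ?card_Alt5.
  by apply/prime_adjC/prime_adj_setX; rewrite ?card_Alt5.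
case=> _ [x]; rewrite inE => /andP[_ Cx2] x10.
have co10C : coprime 10 #|C| by rewrite cardC coprimeXr.
have x1_10 := dvdn_order_fst_coprime Cx2 co10C x10.
have o5 : #[x.1]%g = 5.
  by rewrite -{2}[5](card_ord 5) perm_order_prime_card ?card_ord // (dvdn_trans _ x1_10).
by rewrite o5 in x1_10.
Qed.

Lemma codegree_graph_Alt5_setX : [/\ codeg_adj G 2 3, codeg_adj G 3 5 & codeg_adj G 2 5].
Proof.
pose K := setX_group A [1 gT]%G; pose H := setX_group [1 {perm 'I_5}]%G C.
have KxH : (K \x H)%g = G := setX_dprod A C.
have isoK : (A \isog K)%g := isog_setX1 gT A.
have simK : simple K by rewrite -(isog_simple isoK) simple_Alt5 ?card_ord.
have nabK : ~~ abelian K.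
  by rewrite -(isog_abelian isoK); apply/negP => /abelian_sol; rewrite solvable_AltF ?card_ord.
have cardK : #|K| = 60 by rewrite -(card_isog isoK) card_Alt5.
have [i nz_i [d chi_i1 d236]] := perfect_order60_irr_degree cardK (simple_der1 simK nabK).
have isoH : (C \isog H)%g := isog_set1X _ C.
have cardH : #|H| = 3 ^ k.+1 by rewrite -(card_isog isoH).
have abH : abelian H by rewrite -(isog_abelian isoH).
have pH : (3.-group H)%g by rewrite /pgroup cardH pnatX pnat_id.
have NH : 1 < Nirr H by rewrite NirrE classes_gt1 -cardG_gt1 cardH (ltn_exp2l 0) // expn_gt0.
pose j : Iirr H := Ordinal NH; have nz_j : j != 0%R by [].
have [d_dvd c6 c15 c10] := codegree_A5_dvdn d236 (index_cfker_pgroup pH nz_j).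
have := cod_dprod_Iirr KxH (simple_center simK nabK) (simple_cfker_irr simK nz_i)
  (char_abelianP _ abH j).
rewrite cardK chi_i1 -(natf_div _ d_dvd) => cod_ij.
by split; split=> //; exists (dprod_Iirr KxH (i, j)), (60 * #|H : cfker ('chi_j)%R|%g %/ d).
Qed.

End Alt5TimesThreeGroup.

Theorem mainTheorem8 :
  forall n : nat, exists (gT : finGroupType) (G : {group gT}),
    (n < #|G|)%N /\
    exists p q r : nat,
      [/\ uniq [:: p; q; r], perm_eq (primes #|G|) [:: p; q; r],
          (* prime graph: path p - q - r *)
          [/\ prime_adj G p q, prime_adj G q r & ~ prime_adj G p r] &
          (* codegree graph: triangle *)
          [/\ codeg_adj G p q, codeg_adj G q r & codeg_adj G p r]].
Proof.
move=> n; pose C := (Zp (3 ^ n.+1))%G.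
have cardC : #|C| = 3 ^ n.+1 by rewrite card_Zp ?expn_gt0.
have abC : abelian C := abelianS (subsetT _) (Zp_abelian _).
exists _, (setX_group ('Alt_('I_5))%G C); split.
  by rewrite (card_Alt5_setX cardC); have := ltn_expl n (isT : 1 < 3); rewrite expnS; lia.
exists 2, 3, 5; split=> //.
- exact: primes_Alt5_setX cardC.
- exact: prime_graph_Alt5_setX cardC.
- exact: codegree_graph_Alt5_setX abC cardC.
Qed.
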